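(* For every $n\ge 1$ and every real $\kappa>\frac{n}{2n-1}$ there exists a doubly stochastic $n\times n$ matrix $\mathcal M_\kappa$ such that no directed $(2n-1)$-regular multigraph on $[n]$ has direct throughput at least $\kappa$ with respect to $\mathcal M_\kappa$.
   Context: Let $n\ge 1$ and $[n]=\{1,\dots,n\}$. Networks are finite directed multigraphs on vertex set $[n]$; self-loops and parallel arcs are allowed. A directed multigraph is directed $r$-regular if every vertex has exactly $r$ outgoing and exactly $r$ incoming arcs (a self-loop at $v$ counts as one outgoing and one incoming arc of $v$). An $n\times n$ matrix is doubly stochastic if all entries are nonnegative and every row and every column sums to $1$. In a directed $(2n-1)$-regular multigraph $G$ on $[n]$ every arc has capacity $\frac{1}{2n-1}$. $G$ directly hosts a nonnegative $n\times n$ matrix $\mathcal M=(a_{i,j})$ if $a_{u,v}\le \frac{m_{u,v}}{2n-1}$ for all $u,v\in[n]$, where $m_{u,v}$ is the number of arcs from $u$ to $v$ in $G$ (i.e., all demand can be routed on single arcs within capacities). The direct throughput of $G$ with respect to a doubly stochastic $\mathcal M$ is the largest $\theta$ such that $G$ directly hosts $\theta\mathcal M$. *)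

From HB Require Import structures.
From mathcomp Require Import all_boot all_order all_algebra.
From mathcomp Require Import classical_sets reals.
Set Implicit Arguments. Unset Strict Implicit. Unset Printing Implicit Defensive.
Import Order.TTheory GRing.Theory Num.Theory.
Local Open Scope ring_scope.
Local Open Scope classical_set_scope.

(* A finite directed multigraph on [n] (vertex i+1 is represented by i : 'I_n),
   self-loops and parallel arcs allowed, is given by its arc-multiplicity
   matrix: G u v = number of arcs from u to v. *)
Definition multigraph (n : nat) := 'M[nat]_n.

Definition directed_regular (n r : nat) (G : multigraph n) : Prop :=
  (forall u : 'I_n, (\sum_(v < n) G u v)%N = r) /\
  (forall v : 'I_n, (\sum_(u < n) G u v)%N = r).

Definition doubly_stochastic (R : realType) (n : nat) (M : 'M[R]_n) : Prop :=
  (forall i j, 0 <= M i j) /\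
  (forall i, \sum_(j < n) M i j = 1) /\
  (forall j, \sum_(i < n) M i j = 1).

Definition directly_hosts (R : realType) (n : nat) (G : multigraph n)
    (A : 'M[R]_n) : Prop :=
  (forall u v, 0 <= A u v) /\
  (forall u v, A u v <= (G u v)%:R / (2 * n - 1)%:R).

Definition direct_throughput (R : realType) (n : nat) (G : multigraph n)
    (M : 'M[R]_n) : R :=
  sup [set theta : R | directly_hosts G (theta *: M)].

From HB Require Import structures.
From mathcomp Require Import all_boot all_order all_algebra.
From mathcomp Require Import classical_sets reals.
From mathcomp Require Import zify.
Import Order.TTheory GRing.Theory Num.Theory.
Local Open Scope ring_scope.

(* Take the uniform matrix with all entries 1/n.  A row of a directed
   (2n-1)-regular multigraph carries 2n-1 < 2n arcs on n entries, so by
   pigeonhole some entry m_{u,v} is at most 1.  Hosting theta/n on that entry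
   forces theta/n <= 1/(2n-1), i.e. the direct throughput is at most
   n/(2n-1) < kappa. *)

Lemma exists_leq1_of_sum_lt_double (n : nat) (f : 'I_n -> nat) :
  (\sum_(i < n) f i < 2 * n)%N -> exists i, (f i <= 1)%N.
Proof.
move=> hsum; apply/existsP; apply/contraT; rewrite negb_exists.
move=> /forallP hbig; move: hsum.
have : (\sum_(i < n) 2 <= \sum_(i < n) f i)%N.
  by apply: leq_sum => i _; rewrite ltnNge hbig.
rewrite sum_nat_const card_ord; lia.
Qed.

Section DirectThroughput.

Variables (R : realType) (n : nat).

Lemma directly_hosts0 (G : multigraph n) : directly_hosts G (0 : 'M[R]_n).
Proof. by split=> u v; rewrite mxE // divr_ge0 ?ler0n. Qed.

Lemma direct_throughput_le_entry (G : multigraph n) (M : 'M[R]_n) u v :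
  0 < M u v ->
  direct_throughput G M <= (G u v)%:R / (2 * n - 1)%:R / M u v.
Proof.
move=> Muv_gt0; apply: ge_sup.
  by exists 0 => /=; rewrite scale0r; apply: directly_hosts0.
move=> theta [_ hcap]; have := hcap u v; rewrite mxE => theta_Muv_le.
by rewrite ler_pdivlMr.
Qed.

Definition uniform_mx : 'M[R]_n := const_mx (n%:R)^-1.

Hypothesis n_gt0 : (0 < n)%N.

Lemma uniform_mx_doubly_stochastic : doubly_stochastic uniform_mx.
Proof.
have sum_const (k : 'I_n -> 'I_n) :
    \sum_(j < n) uniform_mx (k j) j = 1.
  rewrite (eq_bigr (fun=> n%:R^-1)) => [|j _]; last by rewrite mxE.
  by rewrite sumr_const card_ord -[_ *+ n]mulr_natr mulVf // pnatr_eq0 -lt0n.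
split; first by move=> i j; rewrite mxE invr_ge0 ler0n.
split=> [i | j]; first exact: (sum_const (fun=> i)).
rewrite (eq_bigr (fun i => uniform_mx j i)) => [|i _]; last by rewrite !mxE.
exact: (sum_const (fun=> j)).
Qed.

Lemma direct_throughput_uniform_le (G : multigraph n) :
  directed_regular (2 * n - 1) G ->
  direct_throughput G uniform_mx <= n%:R / (2 * n - 1)%:R.
Proof.
move=> [hrow _]; pose u0 : 'I_n := Ordinal n_gt0.
have [v Guv_le1] : exists v, (G u0 v <= 1)%N.
  by apply: exists_leq1_of_sum_lt_double; rewrite hrow; lia.
have Muv_gt0 : 0 < uniform_mx u0 v by rewrite mxE invr_gt0 ltr0n.
apply: le_trans (direct_throughput_le_entry _ _ _ _ Muv_gt0) _.
rewrite mxE invrK mulrC ler_pM2l ?ltr0n //.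
by rewrite -[leRHS]mul1r ler_pM2r ?invr_gt0 ?ltr0n ?(ler_nat _ _ 1) //; lia.
Qed.

End DirectThroughput.

Theorem proposition3p6 (R : realType) (n : nat) (hn : (1 <= n)%N) (kappa : R)
    (hk : n%:R / (2 * n - 1)%:R < kappa) :
  exists M : 'M[R]_n, doubly_stochastic M /\
    forall G : multigraph n, directed_regular (2 * n - 1) G ->
      ~ (kappa <= direct_throughput G M).
Proof.
exists (uniform_mx R n); split; first exact: uniform_mx_doubly_stochastic.
move=> G hG; apply/negP; rewrite -ltNge.
exact: le_lt_trans (direct_throughput_uniform_le R n hn G hG) hk.
Qed.
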